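(* There exist constants $c>0$ and $m_0$ such that for every integer $m\ge m_0$ the following holds: every unlabeled tabletop rearrangement instance with $n=m^2$ congruent objects whose unlabeled dependency graph is isomorphic to the dependency grid $\mathcal{D}(m,2m)$ (by an isomorphism sending start vertices to start vertices) has $\mathrm{MRB}\ge c\,m=c\sqrt{n}$.
   Context: An unlabeled tabletop rearrangement instance consists of $n$ congruent, interchangeable objects in a bounded planar workspace with a feasible start arrangement and a feasible goal arrangement (poses in $SE(2)$; feasible means no two placed footprints have intersecting interiors). Its unlabeled dependency graph is bipartite, with a start vertex for each start pose and a goal vertex for each goal pose, and an edge between a start and a goal vertex iff footprints at those poses overlap. A plan with external buffers: each object is picked from its start pose exactly once and either placed at an unoccupied goal pose or into an external buffer (unlimited capacity), in the latter case later moved from the buffer to an unoccupied goal pose; an object may be placed at a goal pose only if it overlaps no object currently in the workspace; at the end all goal poses are occupied. Running buffers at a moment = number of objects in buffers; $\mathrm{MRB}$ = minimum over plans of the maximum number of running buffers. The dependency grid $\mathcal{D}(w,h)$ is the grid graph with vertices $v_{x,y}$, $1\le x\le w$ (columns), $1\le y\le h$ (rows), where $v_{x,y}$ and $v_{x',y'}$ are adjacent iff $|x-x'|+|y-y'|=1$; $v_{x,y}$ is a start vertex if $x+y$ is even and a goal vertex otherwise. *)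

From Stdlib Require Export Reals.
From mathcomp Require Import all_boot.
Set Implicit Arguments. Unset Strict Implicit. Unset Printing Implicit Defensive.

(* vertex v_{x,y} is represented by the pair (x,y), 1 <= x <= w, 1 <= y <= h *)
Definition in_grid (w h : nat) (v : nat * nat) : bool :=
  [&& 1 <= v.1, v.1 <= w, 1 <= v.2 & v.2 <= h].
Definition grid_start (v : nat * nat) : bool := ~~ odd (v.1 + v.2).
Definition grid_goal (v : nat * nat) : bool := odd (v.1 + v.2).
Definition grid_adj (v v' : nat * nat) : bool :=
  (maxn v.1 v'.1 - minn v.1 v'.1) + (maxn v.2 v'.2 - minn v.2 v'.2) == 1.

Section Rearrangement.
Variables (Pose : Type) (ov : Pose -> Pose -> Prop) (n : nat).
Variables (st gl : 'I_n -> Pose).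

Definition feasible (a : 'I_n -> Pose) : Prop :=
  forall i j, i != j -> ~ ov (a i) (a j).

(* the unlabeled dependency graph (start i -- goal j iff overlap) is isomorphic
   to D(w,h) by an isomorphism sending start vertices to start vertices *)
Definition dep_graph_iso_grid (w h : nat) : Prop :=
  exists (fs fg : 'I_n -> nat * nat),
    [/\ injective fs, injective fg,
        (forall i, in_grid w h (fs i) && grid_start (fs i)) &
        (forall j, in_grid w h (fg j) && grid_goal (fg j))] /\
    [/\ (forall v, in_grid w h v -> grid_start v -> exists i, fs i = v),
        (forall v, in_grid w h v -> grid_goal v -> exists j, fg j = v) &
        (forall i j, ov (st i) (gl j) <-> grid_adj (fs i) (fg j))].

Inductive action :=
| Direct of 'I_n & 'I_n   (* pick object at start s, place at goal g *)
| ToBuf of 'I_n           (* pick object at start s, put it into the buffer *)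
| FromBuf of 'I_n.        (* move an object from the buffer to goal g *)

(* state: start poses still holding their (unpicked) object, goal poses occupied,
   number of objects in the buffer (running buffers) *)
Record state := State { occ : {set 'I_n}; filled : {set 'I_n}; buf : nat }.

Definition init_state : state := State [set: 'I_n] set0 0.

Inductive step : state -> action -> state -> Prop :=
| step_direct (o f : {set 'I_n}) b s g :
    s \in o -> g \notin f ->
    (forall s', s' \in o -> s' != s -> ~ ov (st s') (gl g)) ->
    (forall g', g' \in f -> ~ ov (gl g') (gl g)) ->
    step (State o f b) (Direct s g) (State (o :\ s) (g |: f) b)
| step_tobuf (o f : {set 'I_n}) b s :
    s \in o ->
    step (State o f b) (ToBuf s) (State (o :\ s) f b.+1)
| step_frombuf (o f : {set 'I_n}) b g :
    0 < b -> g \notin f ->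
    (forall s', s' \in o -> ~ ov (st s') (gl g)) ->
    (forall g', g' \in f -> ~ ov (gl g') (gl g)) ->
    step (State o f b) (FromBuf g) (State o (g |: f) b.-1).

Inductive run : state -> seq action -> seq state -> Prop :=
| run_nil s : run s [::] [::]
| run_cons s a s' p tr : step s a s' -> run s' p tr -> run s (a :: p) (s' :: tr).

Definition max_running (tr : seq state) : nat := \max_(s <- tr) buf s.

Definition valid_plan (p : seq action) (tr : seq state) : Prop :=
  run init_state p tr /\ filled (last init_state tr) = [set: 'I_n].

(* MRB >= x : every valid plan reaches at least x running buffers at some moment
   (MRB is the minimum over valid plans of max_running) *)
Definition MRB_ge (x : R) : Prop :=
  forall p tr, valid_plan p tr -> Rle x (INR (max_running tr)).

End Rearrangement.

(** Pairing the rows 2j+1 and 2j+2 of D(m, 2m) turns the grid into an m x m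
    array of blocks, each holding one start vertex and one adjacent goal
    vertex; the goal of a block is moreover adjacent to the starts of its two
    horizontal neighbours and of one vertical neighbour (above it in even
    columns, below it in odd ones).  Look at a plan at the moment when exactly
    m * floor(m/2) objects have been picked, and let T be the set of blocks
    whose start has been picked.  A goal can only be filled once every start
    overlapping it is picked, so the filled goals lie in T and avoid the
    boundary of T (the blocks of T with a neighbour outside T).  Every picked
    object that is not at a goal is in the buffer, so at that moment the
    buffer holds at least |boundary T| objects.  Counting rows that are
    neither full nor empty, or, if both a full and an empty row exist, the
    columns of the suitable parity, gives |boundary T| >= floor(m/2), which is
    at least m/4 once m >= 2. *)
From Stdlib Require Import Reals Lra.
From mathcomp Require Import all_boot zify.
Set Implicit Arguments. Unset Strict Implicit. Unset Printing Implicit Defensive.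

(* Block (x, j) of D(m, 2m), with 0-based x and j, consists of the cells in
   column x + 1 and rows 2j + 1, 2j + 2; its start vertex lies in row 2j + 1
   if x is even and in row 2j + 2 if x is odd. *)
Definition start_cell (x j : nat) : nat * nat := (x.+1, (2 * j).+1 + odd x).
Definition goal_cell (x j : nat) : nat * nat := (x.+1, (2 * j).+2 - odd x).

Definition block_nbr (x j x' j' : nat) : bool :=
  [|| (x' == x.+1) && (j' == j), (x == x'.+1) && (j' == j),
      [&& ~~ odd x, x' == x & j' == j.+1] | [&& odd x, x' == x & j == j'.+1]].

Lemma grid_adj_same_block x j : grid_adj (start_cell x j) (goal_cell x j).
Proof. by rewrite /grid_adj /=; apply/eqP; lia. Qed.

Lemma grid_adj_block_nbr x j x' j' :
  block_nbr x j x' j' -> grid_adj (start_cell x' j') (goal_cell x j).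
Proof. by rewrite /block_nbr /grid_adj /= => h; apply/eqP; lia. Qed.

Lemma crossing (f : nat -> bool) a b : a <= b -> f a -> ~~ f b ->
  exists2 x, a <= x < b & f x && ~~ f x.+1.
Proof.
elim: b => [|b IH] hab fa fb.
  have a0 : a = 0 by lia.
  by rewrite -a0 fa in fb.
have {}hab : a <= b.
  by move: hab; rewrite leq_eqVlt => /orP[/eqP ea | //]; rewrite -ea fa in fb.
case: (boolP (f b)) => fb'; first by exists b; [lia | apply/andP].
by have [x hx fx] := IH hab fa fb'; exists x; first lia.
Qed.

Lemma card_odd_ord n : #|[set x : 'I_n | odd x]| = n./2.
Proof.
rewrite -sum1_card big_mkcond /=; under eq_bigr do rewrite inE.
elim: n => [|n IH]; first by rewrite big_ord0.
by rewrite big_ord_recr /= IH; case: (boolP (odd n)) => h /=; lia.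
Qed.

Lemma card_le_cover (aT rT : finType) (f : aT -> rT) (A : {set aT}) (B : {set rT}) :
  (forall y, y \in B -> exists2 x, x \in A & f x = y) -> #|B| <= #|A|.
Proof.
move=> cover; apply: leq_trans (leq_imset_card f A).
by apply/subset_leq_card/subsetP => y /cover [x hx <-]; exact: imset_f.
Qed.

Section PlanInvariant.
Variables (Pose : Type) (ov : Pose -> Pose -> Prop) (n : nat).
Variables (st gl : 'I_n -> Pose).

Definition picked (s : state n) : {set 'I_n} := ~: occ s.

Definition plan_inv (s : state n) : Prop :=
  buf s + #|filled s| = #|picked s| /\
  forall g, g \in filled s -> forall i, ov (st i) (gl g) -> i \in picked s.

Lemma plan_inv_init : plan_inv (init_state n).
Proof.
split; first by rewrite /picked /= setCT !cards0.
by move=> g; rewrite inE.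
Qed.

Lemma card_pick (o : {set 'I_n}) s : s \in o -> #|~: (o :\ s)| = #|~: o|.+1.
Proof. by move=> hs; rewrite setCD setUC cardsU1 in_setC hs. Qed.

Lemma step_plan_inv s a s' : step ov st gl s a s' -> plan_inv s ->
  plan_inv s' /\ #|picked s'| <= #|picked s|.+1.
Proof.
rewrite /plan_inv /picked.
case=> {s a s'} [o f b s g hs hg hsg _ | o f b s hs | o f b g hb hg hsg _] /= [e hi].
- rewrite (card_pick hs) cardsU1 hg /=; split; [split; [lia|] | lia].
  move=> g'; rewrite in_setU1 => /orP[/eqP -> | hg'] i hov; rewrite !inE negb_and negbK.
  + by case: (eqVneq i s) => //= his; apply/negP => hio; exact: hsg i hio his hov.
  + by move: (hi g' hg' i hov); rewrite inE => ->; rewrite orbT.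
- rewrite (card_pick hs) addSn e; split; [split=> // | exact: ltnSn].
  move=> g hg i hov; rewrite !inE negb_and.
  by move: (hi g hg i hov); rewrite inE => ->; rewrite orbT.
- rewrite cardsU1 hg /=; split; [split; [lia|] | lia].
  move=> g'; rewrite in_setU1 => /orP[/eqP -> | hg'] i hov; last exact: hi g' hg' i hov.
  by rewrite inE; apply/negP => hio; exact: hsg i hio hov.
Qed.

Lemma run_plan_inv s p tr : run ov st gl s p tr -> plan_inv s -> plan_inv (last s tr).
Proof.
elim=> {s p tr} // s a s' p tr hst _ IH hI /=.
exact: IH (step_plan_inv hst hI).1.
Qed.

(* Objects are picked one at a time. *)
Lemma run_reaches_picked s p tr k : run ov st gl s p tr -> plan_inv s ->
  #|picked s| < k <= #|picked (last s tr)| ->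
  exists s', [/\ List.In s' tr, plan_inv s' & #|picked s'| = k].
Proof.
elim=> {s p tr} /= [s _ | s a s' p tr hst _ IH hI]; first lia.
have [hI' hc] := step_plan_inv hst hI.
case: (eqVneq #|picked s'| k) => [e _ | ne /andP[hk hkl]]; first by exists s'; split; first left.
have [|s'' [h1 h2 h3]] := IH hI'.
  by rewrite hkl andbT ltn_neqAle ne (leq_trans hc hk).
by exists s''; split; first right.
Qed.

Lemma buf_le_max_running (s : state n) (tr : seq (state n)) : List.In s tr -> buf s <= max_running tr.
Proof.
rewrite /max_running; elim: tr => [//|s0 tr IH] /= [-> | h]; rewrite big_cons.
  exact: leq_maxl.
exact: leq_trans (IH h) (leq_maxr _ _).
Qed.

End PlanInvariant.

Section Blocks.
Variable m' : nat.
Local Notation M := m'.+1.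
Implicit Types (d : 'I_M * 'I_M) (T : {set 'I_M * 'I_M}).

Definition block_of (v : nat * nat) : 'I_M * 'I_M :=
  (inord v.1.-1, inord (v.2.-1)./2).

Lemma start_cell_in_grid d :
  in_grid M (2 * M) (start_cell d.1 d.2) && grid_start (start_cell d.1 d.2).
Proof.
case: d => x j /=; have := ltn_ord x; have := ltn_ord j.
by rewrite /in_grid /grid_start /=; lia.
Qed.

Lemma block_of_start_cell d : block_of (start_cell d.1 d.2) = d.
Proof.
case: d => x j; have := ltn_ord x; have := ltn_ord j => hj hx.
by congr pair; apply: val_inj; rewrite /= inordK /=; lia.
Qed.

Lemma start_cell_block_of v : in_grid M (2 * M) v -> grid_start v ->
  start_cell (block_of v).1 (block_of v).2 = v.
Proof.
case: v => x y; rewrite /in_grid /grid_start /= => hv hs.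
by rewrite !inordK; [congr pair | lia | lia]; lia.
Qed.

Lemma goal_cell_block_of v : in_grid M (2 * M) v -> grid_goal v ->
  goal_cell (block_of v).1 (block_of v).2 = v.
Proof.
case: v => x y; rewrite /in_grid /grid_goal /= => hv hg.
by rewrite !inordK; [congr pair | lia | lia]; lia.
Qed.

Definition boundary T : {set 'I_M * 'I_M} :=
  [set d in T | [exists d' : 'I_M * 'I_M, block_nbr d.1 d.2 d'.1 d'.2 && (d' \notin T)]].

Lemma boundary_sub T : boundary T \subset T.
Proof. by apply/subsetP => d; rewrite inE => /andP[]. Qed.

Lemma mem_boundary T d d' : d \in T -> d' \notin T ->
  block_nbr d.1 d.2 d'.1 d'.2 -> d \in boundary T.
Proof. by move=> hd hd' hn; rewrite inE hd; apply/existsP; exists d'; rewrite hn. Qed.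

Lemma row_boundary T (a b j : 'I_M) : (a, j) \in T -> (b, j) \notin T ->
  exists2 d, d \in boundary T & d.2 = j.
Proof.
pose f z := (inord z, j) \in T.
move=> ha hb; have fa : f a by rewrite /f inord_val.
have fb : ~~ f b by rewrite /f inord_val.
have hb' := ltn_ord b; have ha' := ltn_ord a.
case: (ltngtP a b) => hab.
- have [x /andP[_ hx] /andP[fx fx']] := crossing (ltnW hab) fa fb.
  exists (inord x, j) => //; apply: (mem_boundary (d' := (inord x.+1, j))) => //.
  by rewrite /block_nbr /= !inordK; lia.
- have [x /andP[_ hx] /andP[fx /negPn fx']] :=
    crossing (f := fun z => ~~ f z) (ltnW hab) fb (introT negPn fa).
  exists (inord x.+1, j) => //; apply: (mem_boundary (d' := (inord x, j))) => //.
  by rewrite /block_nbr /= !inordK; lia.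
- by move: hb; rewrite -(val_inj hab) ha.
Qed.

Lemma column_boundary T (x j1 j2 : 'I_M) : (x, j1) \in T -> (x, j2) \notin T ->
  (if odd x then j2 < j1 else j1 < j2) -> exists2 d, d \in boundary T & d.1 = x.
Proof.
pose f z := (x, inord z) \in T.
move=> h1 h2; have f1 : f j1 by rewrite /f inord_val.
have f2 : ~~ f j2 by rewrite /f inord_val.
have hj1 := ltn_ord j1; have hj2 := ltn_ord j2.
case: ifP => hx hj.
- have [j /andP[_ hj'] /andP[fj /negPn fj']] :=
    crossing (f := fun z => ~~ f z) (ltnW hj) f2 (introT negPn f1).
  exists (x, inord j.+1) => //; apply: (mem_boundary (d' := (x, inord j))) => //.
  by rewrite /block_nbr /= hx !inordK; lia.
- have [j /andP[_ hj'] /andP[fj fj']] := crossing (ltnW hj) f1 f2.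
  exists (x, inord j) => //; apply: (mem_boundary (d' := (x, inord j.+1))) => //.
  by rewrite /block_nbr /= hx !inordK; lia.
Qed.

Lemma card_boundary T : #|T| = M * M./2 -> M./2 <= #|boundary T|.
Proof.
move=> cardT.
pose full := [set j : 'I_M | [forall x, (x, j) \in T]].
pose empty := [set j : 'I_M | [forall x, (x, j) \notin T]].
pose mixed := ~: (full :|: empty).
have mixed_le : #|mixed| <= #|boundary T|.
  apply: (card_le_cover (f := snd)) => j; rewrite !inE negb_or => /andP[].
  by move=> /forallPn[b hb] /forallPn[a /negPn ha]; exact: row_boundary ha hb.
case: (set_0Vmem full) => [full0 | [j1 hj1]].
  suff : M * M./2 <= M * #|mixed| by rewrite leq_pmul2l // => /leq_trans; apply.
  rewrite -cardT (_ : M * _ = #|setX [set: 'I_M] mixed|); last by rewrite cardsX cardsT card_ord.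
  apply/subset_leq_card/subsetP => -[x j] hxj.
  rewrite in_setX in_setT in_setC in_setU full0 in_set0 inE /=.
  by apply/forallPn; exists x; rewrite negbK.
case: (set_0Vmem empty) => [empty0 | [j2 hj2]].
  have full_le : M * #|full| <= M * M./2.
    rewrite -cardT (_ : M * _ = #|setX [set: 'I_M] full|); last by rewrite cardsX cardsT card_ord.
    by apply/subset_leq_card/subsetP => -[x j]; rewrite !inE => /forallP; apply.
  have := cardsC (full :|: empty); rewrite -/mixed empty0 setU0 card_ord.
  by rewrite leq_pmul2l // in full_le; lia.
rewrite !inE in hj1 hj2.
have column_le (A : {set 'I_M}) : (forall x, x \in A -> if odd x then j2 < j1 else j1 < j2) ->
    #|A| <= #|boundary T|.
  move=> hA; apply: (card_le_cover (f := fst)) => x /hA.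
  exact: column_boundary (forallP hj1 x) (forallP hj2 x).
case: (ltngtP j1 j2) => hj.
- apply: (leq_trans _ (column_le (~: [set x : 'I_M | odd x]) _)).
    by rewrite cardsCs setCK card_ord card_odd_ord; lia.
  by move=> x; rewrite !inE => /negbTE ->.
- rewrite -card_odd_ord; apply: column_le => x; rewrite inE => ->; exact: hj.
- by move: (forallP hj2 ord0); rewrite -(val_inj hj) (forallP hj1 ord0).
Qed.

End Blocks.

Section GridInstance.
Variables (m' : nat) (Pose : Type) (ov : Pose -> Pose -> Prop) (n : nat).
Variables (st gl : 'I_n -> Pose) (fs fg : 'I_n -> nat * nat).
Local Notation M := m'.+1.
Hypotheses (fs_inj : injective fs) (fg_inj : injective fg).
Hypothesis fs_start : forall i, in_grid M (2 * M) (fs i) && grid_start (fs i).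
Hypothesis fg_goal : forall j, in_grid M (2 * M) (fg j) && grid_goal (fg j).
Hypothesis fs_onto : forall v, in_grid M (2 * M) v -> grid_start v -> exists i, fs i = v.
Hypothesis ov_grid_adj : forall i j, ov (st i) (gl j) <-> grid_adj (fs i) (fg j).

Let start_block i := block_of m' (fs i).
Let goal_block j := block_of m' (fg j).

Lemma fs_cell i : fs i = start_cell (start_block i).1 (start_block i).2.
Proof. by case/andP: (fs_start i) => hv hs; rewrite start_cell_block_of. Qed.

Lemma fg_cell j : fg j = goal_cell (goal_block j).1 (goal_block j).2.
Proof. by case/andP: (fg_goal j) => hv hg; rewrite goal_cell_block_of. Qed.

Lemma start_block_inj : injective start_block.
Proof. by move=> i i' e; apply: fs_inj; rewrite fs_cell e -fs_cell. Qed.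

Lemma goal_block_inj : injective goal_block.
Proof. by move=> j j' e; apply: fg_inj; rewrite fg_cell e -fg_cell. Qed.

Lemma start_block_onto d : exists i, start_block i = d.
Proof.
have /andP[hv hs] := start_cell_in_grid d; have [i hi] := fs_onto hv hs.
by exists i; rewrite /start_block hi block_of_start_cell.
Qed.

Lemma ov_same_block i j : start_block i = goal_block j -> ov (st i) (gl j).
Proof. by move=> e; apply/ov_grid_adj; rewrite fs_cell fg_cell e grid_adj_same_block. Qed.

Lemma ov_block_nbr i j :
  block_nbr (goal_block j).1 (goal_block j).2 (start_block i).1 (start_block i).2 -> ov (st i) (gl j).
Proof. by move=> hn; apply/ov_grid_adj; rewrite fs_cell fg_cell grid_adj_block_nbr. Qed.

Lemma buf_ge_half s : plan_inv ov st gl s -> #|picked s| = M * M./2 -> M./2 <= buf s.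
Proof.
move=> [hbuf hfilled] hk; pose T := start_block @: picked s.
have inT i : (start_block i \in T) = (i \in picked s) by rewrite mem_imset //; exact: start_block_inj.
have filled_sub : goal_block @: filled s \subset T :\: boundary T.
  apply/subsetP => _ /imsetP[j hj ->]; have [i hi] := start_block_onto (goal_block j).
  rewrite -hi in_setD inT; apply/andP; split; last first.
    by apply: (hfilled _ hj i); apply: ov_same_block.
  apply/negP; rewrite inE => /andP[_ /existsP[d' /andP[hn]]].
  have [i' hi'] := start_block_onto d'; rewrite -hi' inT => /negP; apply.
  by apply: (hfilled _ hj i'); apply: ov_block_nbr; rewrite -hi hi'.
have card_T : #|T| = #|picked s| by rewrite card_imset; last exact: start_block_inj.
have bd_ge : M./2 <= #|boundary T| by apply: card_boundary; rewrite card_T.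
apply: leq_trans bd_ge _.
rewrite -(leq_add2r #|filled s|) hbuf -card_T.
have := subset_leq_card filled_sub; rewrite card_imset; last exact: goal_block_inj.
by rewrite cardsD (setIidPr (boundary_sub T)) leq_subRL // subset_leq_card // boundary_sub.
Qed.

End GridInstance.

Lemma max_running_grid (m' : nat) (Pose : Type) (ov : Pose -> Pose -> Prop)
    (st gl : 'I_(m'.+1 ^ 2) -> Pose) p tr :
  0 < m' -> dep_graph_iso_grid ov st gl m'.+1 (2 * m'.+1) ->
  valid_plan ov st gl p tr -> m'.+1./2 <= max_running tr.
Proof.
move=> hm [fs [fg [[fs_inj fg_inj fs_start fg_goal] [fs_onto _ hov]]]] [hrun hlast].
have [e _] := run_plan_inv hrun (plan_inv_init ov st gl).
rewrite hlast cardsT card_ord in e.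
have [|s [hin hinv hk]] := run_reaches_picked (k := m'.+1 * m'.+1./2) hrun (plan_inv_init ov st gl).
  by rewrite /picked /= setCT cards0 -e; nia.
apply: leq_trans (buf_le_max_running hin).
exact: (buf_ge_half fs_inj fg_inj fs_start fg_goal fs_onto hov hinv hk).
Qed.

Theorem lemma2 :
  exists (c : R) (m0 : nat), Rlt 0 c /\
    forall m : nat, m0 <= m ->
    forall (Pose : Type) (ov : Pose -> Pose -> Prop)
           (st gl : 'I_(m ^ 2) -> Pose),
      (forall p q, ov p q -> ov q p) ->
      feasible ov st -> feasible ov gl ->
      dep_graph_iso_grid ov st gl m (2 * m) ->
      MRB_ge ov st gl (Rmult c (INR m)).
Proof.
exists (Rinv 4), 2; split; first lra.
move=> [//|m'] hm Pose ov st gl _ _ _ hiso p tr hvalid.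
have half_le := max_running_grid hm hiso hvalid.
have /leP/le_INR : m'.+1 <= 4 * max_running tr by lia.
by rewrite mult_INR /=; lra.
Qed.
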